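(* Let $\mathbf u$ be the infinite word over $\{0,1,2,3\}$ that is the fixed point starting with $0$ of the morphism $\varphi$ given by $\varphi(0)=0130$, $\varphi(1)=1021$, $\varphi(2)=102$, $\varphi(3)=013$. Let $\theta_1,\theta_2$ be the antimorphisms on $\{0,1,2,3\}^*$ defined on letters by $\theta_1: 0\mapsto 1, 1\mapsto 0, 2\mapsto 2, 3\mapsto 3$ and $\theta_2: 0\mapsto 0, 1\mapsto 1, 2\mapsto 3, 3\mapsto 2$. Then every nonempty bispecial factor $w$ of $\mathbf u$ satisfies $\theta_i(w)=w$ for some $i\in\{1,2\}$.
   Context: The fixed point starting with $0$ is the unique infinite word having $\varphi^n(0)$ as a prefix for every $n$. An antimorphism $\theta$ satisfies $\theta(vw)=\theta(w)\theta(v)$. A factor $w$ of $\mathbf u$ is right special if $wa,wb$ are factors of $\mathbf u$ for two distinct letters $a,b$, left special if $aw,bw$ are factors for two distinct letters $a,b$, and bispecial if it is both. *)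

From mathcomp Require Import all_boot.
Set Implicit Arguments. Unset Strict Implicit. Unset Printing Implicit Defensive.

Definition letter := 'I_4.
Definition L (n : nat) : letter := inord n.

Definition phi_letter (a : letter) : seq letter :=
  match val a with
  | 0 => [:: L 0; L 1; L 3; L 0]
  | 1 => [:: L 1; L 0; L 2; L 1]
  | 2 => [:: L 1; L 0; L 2]
  | _ => [:: L 0; L 1; L 3]
  end.

Definition phi (w : seq letter) : seq letter := flatten (map phi_letter w).

(* The fixed point u starting with 0: its n-th letter is the n-th letter of
   phi^(n+1)(0), which has length > n and is a prefix of all later iterates. *)
Definition u (n : nat) : letter := nth (L 0) (iter n.+1 phi [:: L 0]) n.

Definition factor (w : seq letter) : Prop :=
  exists i : nat, w = [seq u (i + k) | k <- iota 0 (size w)].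

Definition right_special (w : seq letter) : Prop :=
  exists a b : letter, a <> b /\ factor (rcons w a) /\ factor (rcons w b).
Definition left_special (w : seq letter) : Prop :=
  exists a b : letter, a <> b /\ factor (a :: w) /\ factor (b :: w).
Definition bispecial (w : seq letter) : Prop :=
  factor w /\ left_special w /\ right_special w.

Definition antimorph (f : letter -> letter) (w : seq letter) : seq letter :=
  rev (map f w).

Definition theta1_letter (a : letter) : letter :=
  match val a with 0 => L 1 | 1 => L 0 | 2 => L 2 | _ => L 3 end.
Definition theta2_letter (a : letter) : letter :=
  match val a with 0 => L 0 | 1 => L 1 | 2 => L 3 | _ => L 2 end.

Definition theta1 := antimorph theta1_letter.
Definition theta2 := antimorph theta2_letter.

(* Cut u = phi(u) into the blocks phi(u_j).  The letter five places after the
   start of phi(u_j) is u_j itself, so long factors desubstitute uniquely.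
   The only letters with two left extensions are 0 (by 1 and 3) and 1 (by 0
   and 2).  Desubstituting and inducting on the length, a factor preceded by
   both 1 and 3 is a prefix P of u; the exchange sigma = (0 1)(2 3) commutes
   with phi, hence preserves the factors, so a factor preceded by both 0 and 2
   is sigma(P).  The factors are also closed under theta2, because u has
   arbitrarily long theta2-palindromic prefixes: if P is one ending with 0, so
   is phi(P) 10210.  For w bispecial, w and the left special factor theta2(w)
   both lie in {P, sigma(P)}, whence theta2(w) = w or theta1(w) =
   sigma(theta2(w)) = w. *)

From mathcomp Require Import all_boot zify.
Set Implicit Arguments. Unset Strict Implicit. Unset Printing Implicit Defensive.

Definition block (a : nat) : seq nat :=
  match a with
  | 0 => [:: 0; 1; 3; 0]
  | 1 => [:: 1; 0; 2; 1]
  | 2 => [:: 1; 0; 2]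
  | _ => [:: 0; 1; 3]
  end.

Definition blocks (s : seq nat) : seq nat := flatten (map block s).

Lemma blocks_cat s t : blocks (s ++ t) = blocks s ++ blocks t.
Proof. by rewrite /blocks map_cat flatten_cat. Qed.

Lemma blocks1 a : blocks [:: a] = block a.
Proof. by rewrite /blocks /= cats0. Qed.

Lemma size_block a : 3 <= size (block a) <= 4.
Proof. by case: a => [|[|[|[|a]]]]. Qed.

Lemma val_L n : n < 4 -> val (L n) = n.
Proof. exact: inordK. Qed.

Lemma map_val_phi s : map val (phi s) = blocks (map val s).
Proof.
rewrite /phi /blocks map_flatten -!map_comp; congr flatten; apply: eq_map.
by case=> [[|[|[|[|a]]]] lt_a4] /=; rewrite ?val_L.
Qed.

Definition iterate k : seq nat := map val (iter k phi [:: L 0]).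

Lemma iterate0 : iterate 0 = [:: 0].
Proof. by rewrite /iterate /= val_L. Qed.

Lemma iterateS k : iterate k.+1 = blocks (iterate k).
Proof. by rewrite /iterate iterS map_val_phi. Qed.

Lemma size_blocks s : 3 * size s <= size (blocks s).
Proof.
elim: s => //= a s IHs; rewrite /blocks /= size_cat mulnS.
by apply: leq_add => //; case/andP: (size_block a).
Qed.

Lemma size_iterate k : k < size (iterate k).
Proof.
elim: k => [|k IHk] //; rewrite iterateS; apply: leq_trans (size_blocks _).
by lia.
Qed.

Lemma prefix_blocks s t : prefix s t -> prefix (blocks s) (blocks t).
Proof. by case/prefixP=> r ->; rewrite blocks_cat prefix_prefix. Qed.

Lemma prefix_iterate : {homo iterate : k l / k <= l >-> prefix k l}.
Proof.
apply: homo_leq => [s | s t r | ]; [exact: prefix_refl | exact: prefix_trans |].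
elim=> [|k IHk]; first by rewrite iterateS iterate0.
by rewrite iterateS (iterateS k.+1) prefix_blocks.
Qed.

Definition code (i : nat) : nat := val (u i).

Lemma code_lt4 i : code i < 4.
Proof. exact: ltn_ord. Qed.

Lemma code_iterate k i : i < size (iterate k) -> code i = nth 0 (iterate k) i.
Proof.
move=> lt_ik.
have nth_iterate l m : l <= m -> i < size (iterate l) ->
    nth 0 (iterate l) i = nth 0 (iterate m) i.
  by move=> /prefix_iterate /prefixP [t ->] lt_i; rewrite nth_cat lt_i.
have lt_i := ltn_trans (ltnSn i) (size_iterate i.+1).
have -> : code i = nth 0 (iterate i.+1) i.
  by rewrite /code /u /iterate (nth_map (L 0)) // -(size_map val).
case: (leqP k i.+1) => [le_k | /ltnW le_k].
  by rewrite (nth_iterate k i.+1).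
exact: nth_iterate.
Qed.

(* The block phi(u_j) of u = phi(u) occupies the positions [bpos j, bpos j.+1). *)
Fixpoint bpos (j : nat) : nat :=
  if j is j'.+1 then bpos j' + size (block (code j')) else 0.

Lemma bpos_iterate k j : j <= size (iterate k) ->
  bpos j = size (blocks (take j (iterate k))).
Proof.
elim: j => [|j IHj] lt_jk; first by rewrite take0.
rewrite /= IHj ?(ltnW lt_jk) // (take_nth 0) // -cats1 blocks_cat size_cat.
by rewrite -code_iterate // /blocks /= cats0.
Qed.

Lemma code_block j r : r < size (block (code j)) ->
  code (bpos j + r) = nth 0 (block (code j)) r.
Proof.
move=> lt_r; have lt_j := size_iterate j.
have split_j : blocks (iterate j) =
    blocks (take j (iterate j)) ++ block (code j) ++ blocks (drop j.+1 (iterate j)).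
  rewrite -{1}(cat_take_drop j (iterate j)) (drop_nth 0) //.
  by rewrite blocks_cat (code_iterate lt_j).
rewrite (bpos_iterate (ltnW lt_j)) (@code_iterate j.+1) iterateS split_j.
  by rewrite nth_cat ltnNge leq_addr /= addKn nth_cat lt_r.
by rewrite !size_cat ltn_add2l ltn_addr.
Qed.

Lemma bposS j : bpos j.+1 = bpos j + size (block (code j)).
Proof. by []. Qed.

Lemma bpos_add j m : bpos j + 3 * m <= bpos (j + m).
Proof.
elim: m => [|m IHm]; first by rewrite muln0 !addn0.
by rewrite addnS bposS; have := size_block (code (j + m)); lia.
Qed.

Lemma bpos_ge j : 3 * j <= bpos j.
Proof. by have := bpos_add 0 j. Qed.

Lemma bpos_cover i : exists j r, i = bpos j + r /\ r < size (block (code j)).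
Proof.
elim: i => [|i [j [r [-> lt_r]]]].
  by exists 0, 0; split=> //; have := size_block (code 0); lia.
case: (ltnP r.+1 (size (block (code j)))) => lt_r1; first by exists j, r.+1; lia.
by exists j.+1, 0; rewrite bposS; have := size_block (code j.+1); lia.
Qed.

Lemma code_block_last j : code (bpos j.+1).-1 = code j.
Proof.
have := size_block (code j); rewrite bposS => size_j.
have -> : (bpos j + size (block (code j))).-1 = bpos j + (size (block (code j))).-1.
  by lia.
rewrite code_block; last by lia.
by have := code_lt4 j; case: (code j) => [|[|[|[|a]]]].
Qed.

Definition next_letters (a : nat) : seq nat :=
  match a with
  | 0 => [:: 1; 2]
  | 1 => [:: 0; 3]
  | 2 => [:: 1]
  | 3 => [:: 0]
  | _ => [::]
  end.

Definition adjacent (a b : nat) : bool := b \in next_letters a.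

Lemma adjacent_lt4 a b : adjacent a b -> b < 4.
Proof. by case: a => [|[|[|[|a]]]]; case: b => [|[|[|[|b]]]]. Qed.

Lemma code_adjacent i : adjacent (code i) (code i.+1).
Proof.
elim/ltn_ind: i => i IH; have [j [[|r] [e lt_r]]] := bpos_cover i.+1.
  case: j e lt_r => [|j] e lt_r; first by rewrite addn0 in e.
  rewrite addn0 in e; have lt_ji : j < i by have := bpos_ge j.+1; lia.
  rewrite e; have -> : i = (bpos j.+1).-1 by rewrite -e.
  rewrite code_block_last -[bpos j.+1]addn0 code_block //.
  have := IH j lt_ji; have := code_lt4 j; have := code_lt4 j.+1.
  by case: (code j) => [|[|[|[|a]]]]; case: (code j.+1) => [|[|[|[|b]]]].
rewrite e; have -> : i = bpos j + r by lia.
rewrite !code_block ?(ltnW lt_r) //; move: lt_r; have := code_lt4 j.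
by case: (code j) => [|[|[|[|a]]]] //; case: r {e} => [|[|[|r]]].
Qed.

Definition starts0 (a : nat) : bool := (a == 0) || (a == 3).

(* The five letters of u starting at a block phi(a), whichever letter follows a. *)
Definition window (a : nat) : seq nat :=
  if starts0 a then [:: 0; 1; 3; 0; 1] else [:: 1; 0; 2; 1; 0].

Lemma starts0_adjacent a b : adjacent a b -> starts0 b = odd a.
Proof. by case: a => [|[|[|[|a]]]]; case: b => [|[|[|[|b]]]]. Qed.

Lemma code_next_block j t : t < 3 ->
  code (bpos j + size (block (code j)) + t) = nth 0 (block (code j.+1)) t.
Proof.
by move=> lt_t3; rewrite -bposS code_block //; have := size_block (code j.+1); lia.
Qed.

Lemma code_window j t : t < 5 -> code (bpos j + t) = nth 0 (window (code j)) t.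
Proof.
move=> lt_t5; case: (ltnP t (size (block (code j)))) => [lt_t | ge_t].
  rewrite code_block //; move: lt_t; rewrite /window; have := code_lt4 j.
  by case: (code j) => [|[|[|[|a]]]]; case: t lt_t5 => [|[|[|[|[|t]]]]].
have -> : bpos j + t = bpos j + size (block (code j)) + (t - size (block (code j))).
  by lia.
rewrite code_next_block; last by have := size_block (code j); lia.
move: ge_t lt_t5 (code_adjacent j); rewrite /window; have := code_lt4 j.
case: (code j) => [|[|[|[|a]]]] //; case: (code j.+1) => [|[|[|[|b]]]] //.
all: by case: t => [|[|[|[|[|t]]]]].
Qed.

Lemma code_bpos5 j : code (bpos j + 5) = code j.
Proof.
have -> : bpos j + 5 = bpos j + size (block (code j)) + (5 - size (block (code j))).
  by have := size_block (code j); lia.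
rewrite code_next_block; last by have := size_block (code j); lia.
move: (code_adjacent j); have := code_lt4 j.
by case: (code j) => [|[|[|[|a]]]] //; case: (code j.+1) => [|[|[|[|b]]]].
Qed.

Lemma code0 : code 0 = 0.
Proof. by rewrite (@code_iterate 0) ?iterate0. Qed.

Lemma code_prefix5 t : t < 5 -> code t = nth 0 [:: 0; 1; 3; 0; 1] t.
Proof.
by move=> lt_t5; rewrite -[t]/(bpos 0 + t) code_window // code0.
Qed.

Lemma code3_bpos i : code i = 3 -> exists2 j, i = bpos j + 2 & starts0 (code j).
Proof.
have [j [r [-> lt_r]]] := bpos_cover i; rewrite code_block // => code_i.
have [-> s0_j] : r = 2 /\ starts0 (code j).
  by move: code_i lt_r; have := code_lt4 j;
    case: (code j) => [|[|[|[|a]]]] //; case: r => [|[|[|[|r]]]].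
by exists j.
Qed.

Lemma code_after3 i : code i = 3 -> code i.+1 = 0 /\ code i.+2 = 1.
Proof.
by case/code3_bpos=> j -> s0_j; rewrite -!addnS !code_window // /window s0_j.
Qed.

Lemma boundary_after3 i : code i = 3 -> code i.+3 = 3 ->
  exists2 j, i.+1 = bpos j.+1 & code j = 3.
Proof.
case/code3_bpos=> j -> _; rewrite -!addnS -[2.+3]/5 code_bpos5 => code_j.
by exists j; rewrite // bposS code_j.
Qed.

Lemma boundary_101 i : code i = 1 -> code i.+1 = 0 -> code i.+2 = 1 ->
  exists2 j, i.+1 = bpos j.+1 & code j = 1.
Proof.
have [j [r [-> lt_r]]] := bpos_cover i; rewrite code_block // => code_i.
rewrite -!addnS; case: (ltnP r 3) => [lt_r3 | ge_r3].
  rewrite !code_window //; try lia.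
  by move: code_i lt_r3; rewrite /window; have := code_lt4 j;
    case: (code j) => [|[|[|[|a]]]] //; case: r {lt_r} => [|[|[|r]]].
have [r3 code_j] : r = 3 /\ code j = 1.
  by move: code_i lt_r ge_r3; have := code_lt4 j;
    case: (code j) => [|[|[|[|a]]]] //; case: r => [|[|[|[|r]]]].
by exists j; rewrite // bposS code_j r3.
Qed.

Definition agree (g : nat -> nat) (i j n : nat) : Prop :=
  forall k, k < n -> code (i + k) = g (code (j + k)).

Section BlockImage.

Variable g : nat -> nat.
Hypothesis block_g : forall a, a < 4 -> block (g a) = map g (block a).

Lemma agree_blocks j1 j2 m : agree g j1 j2 m ->
  bpos (j1 + m) - bpos j1 = bpos (j2 + m) - bpos j2 /\
  agree g (bpos j1) (bpos j2) (bpos (j2 + m) - bpos j2).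
Proof.
elim: m => [|m IHm] A; first by rewrite !addn0 !subnn; split=> // k.
have [off_eq A_m] := IHm (fun k lt_k => A k (ltnW lt_k)).
have code_m := A m (ltnSn m).
have size_m : size (block (code (j1 + m))) = size (block (code (j2 + m))).
  by rewrite code_m block_g ?code_lt4 // size_map.
have := bpos_add j1 m; have := bpos_add j2 m; rewrite !addnS !bposS => ge1 ge2.
split=> [|r lt_r]; first by lia.
case: (ltnP r (bpos (j2 + m) - bpos j2)) => [|ge_r]; first exact: A_m.
have -> : bpos j1 + r = bpos (j1 + m) + (r - (bpos (j2 + m) - bpos j2)) by lia.
have -> : bpos j2 + r = bpos (j2 + m) + (r - (bpos (j2 + m) - bpos j2)) by lia.
rewrite !code_block ?size_m ?code_m ?block_g ?code_lt4 ?(nth_map 0) //; lia.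
Qed.

End BlockImage.

Lemma block_id a : a < 4 -> block (id a) = map id (block a).
Proof. by rewrite map_id. Qed.

Lemma agree_desubst j1 j2 m :
  agree id (bpos j1) (bpos j2) (bpos (j1 + m) - bpos j1 + 6) -> agree id j1 j2 m.+1.
Proof.
elim: m => [|m IHm] A.
  move=> k; rewrite ltnS leqn0 => /eqP ->.
  rewrite !addn0 -(code_bpos5 j1) -(code_bpos5 j2) A //.
  by rewrite addn0 subnn.
have A_m : agree id j1 j2 m.+1.
  apply: IHm => k lt_k; apply: A; have := bpos_add j1 m.
  by have := size_block (code (j1 + m)); rewrite (addnS j1) bposS; lia.
have [off_eq _] := agree_blocks block_id A_m.
move=> k; rewrite ltnS leq_eqVlt => /orP [/eqP -> | ]; last exact: A_m.
have := bpos_add j1 m.+1; have := bpos_add j2 m.+1 => ge2 ge1.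
rewrite -code_bpos5 -(code_bpos5 (j2 + m.+1)).
have -> : bpos (j1 + m.+1) + 5 = bpos j1 + (bpos (j1 + m.+1) - bpos j1 + 5) by lia.
have -> : bpos (j2 + m.+1) + 5 = bpos j2 + (bpos (j1 + m.+1) - bpos j1 + 5) by lia.
by apply: A; lia.
Qed.

Lemma agree_desubst_cover j1 j2 n : 6 <= n -> agree id (bpos j1) (bpos j2) n ->
  exists m, [/\ 0 < m < n, agree id j1 j2 m & n <= bpos (j1 + m) - bpos j1 + 5].
Proof.
move=> ge_n6 A.
have ex_m : exists m, n <= bpos (j1 + m) - bpos j1 + 5.
  by exists n; have := bpos_add j1 n; lia.
case: (ex_minnP ex_m) => m le_n min_m.
have m_gt0 : 0 < m by case: m le_n {min_m} => [|m] //; rewrite addn0 subnn; lia.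
have le_m1 : bpos (j1 + m.-1) - bpos j1 + 6 <= n.
  by rewrite leqNgt; apply/negP => lt_n; have := min_m m.-1; lia.
exists m; split=> //.
  by have := bpos_add j1 m.-1; rewrite m_gt0 /=; lia.
by rewrite -(prednK m_gt0); apply: agree_desubst => k lt_k; apply: A; lia.
Qed.

Lemma agree_prefix_window j m : 0 < m -> agree id j 0 m ->
  agree id (bpos j) 0 (bpos (j + m) - bpos j + 5).
Proof.
move=> m_gt0 A; have [off_eq A_blocks] := agree_blocks block_id A.
rewrite add0n [bpos 0]/= subn0 in off_eq A_blocks.
rewrite off_eq => k lt_k; case: (ltnP k (bpos m)) => [|ge_k]; first exact: A_blocks.
have := bpos_add j m => ge_j.
have -> : bpos j + k = bpos (j + m) + (k - bpos m) by lia.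
have -> : 0 + k = bpos m + (k - bpos m) by lia.
have s0_m : starts0 (code (j + m)) = starts0 (code m).
  case: m m_gt0 A {off_eq A_blocks lt_k ge_k ge_j} => [|m] // _ A.
  by rewrite addnS !(starts0_adjacent (code_adjacent _)) (A m).
by rewrite !code_window /window ?s0_m //; lia.
Qed.

Lemma agree_prefix_after13 n i1 i2 : code i1 = 1 -> code i2 = 3 ->
  agree id i1.+1 i2.+1 n -> agree id i1.+1 0 n.
Proof.
elim/ltn_ind: n i1 i2 => n IH i1 i2 code1 code3 A k lt_k.
have [code31 code32] := code_after3 code3.
case: (ltnP n 2) => [lt_n2 | ge_n2].
  have -> : k = 0 by lia.
  by rewrite (A 0) ?addn0 ?code31 ?code0 //; lia.
have code11 : code i1.+1 = 0 by rewrite -[i1.+1]addn0 A ?addn0 //; lia.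
have code12 : code i1.+2 = 1 by have := A 1 ge_n2; rewrite !addn1 code32.
have [J1 e1 codeJ1] := boundary_101 code1 code11 code12.
have s0_J1 : starts0 (code J1.+1).
  by rewrite (starts0_adjacent (code_adjacent J1)) codeJ1.
case: (ltnP k 5) => [lt_k5 | ge_k5].
  by rewrite e1 code_window // /window s0_J1 add0n code_prefix5.
have code33 : code i2.+3 = 3.
  by have := A 2 _; rewrite e1 code_window // /window s0_J1 !addn2 => <- //; lia.
have [J2 e2 codeJ2] := boundary_after3 code3 code33.
rewrite e1 e2 in A *.
(* Both occurrences now start at block boundaries, after the blocks of 1 and 3. *)
have [m [/andP [m_gt0 lt_mn] A_J le_n]] :=
  agree_desubst_cover (leq_ltn_trans ge_k5 lt_k) A.
by apply: (agree_prefix_window m_gt0 (IH m lt_mn J1 J2 codeJ1 codeJ2 A_J)); lia.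
Qed.

Definition sigma (a : nat) : nat :=
  match a with 0 => 1 | 1 => 0 | 2 => 3 | 3 => 2 | _ => a end.

Lemma sigmaK : involutive sigma.
Proof. by case=> [|[|[|[|a]]]]. Qed.

Lemma block_sigma a : a < 4 -> block (sigma a) = map sigma (block a).
Proof. by case: a => [|[|[|[|a]]]]. Qed.

Lemma sigma_image_prefix n : exists i, agree sigma i 0 n.
Proof.
suff [m [i [lt_nm A]]] : exists m i, n < m /\ agree sigma i 0 m.
  by exists i => k lt_k; apply: A; lia.
elim: n => [|n [m [i [lt_nm A]]]].
  exists 1, 1; split=> // k; rewrite ltnS leqn0 => /eqP ->.
  by rewrite code_prefix5 // code0.
have [_ A_blocks] := agree_blocks block_sigma A.
rewrite add0n [bpos 0]/= subn0 in A_blocks.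
by exists (bpos m), (bpos i); split=> //; have := bpos_ge m; lia.
Qed.

Lemma agree_sigma_prefix_after02 n i1 i2 : code i1 = 0 -> code i2 = 2 ->
  agree id i1.+1 i2.+1 n -> agree sigma i1.+1 0 n.
Proof.
move=> code1 code2 A.
have [j S] := sigma_image_prefix (i1 + i2 + n).+1.
have S_at i : i <= i1 + i2 + n -> code (j + i) = sigma (code i).
  by move=> le_i; rewrite -[i in code i]add0n -S.
have shift i k : (j + i).+1 + k = j + (i.+1 + k) by lia.
have A_j : agree id (j + i1).+1 (j + i2).+1 n.
  by move=> k lt_k; rewrite !shift !S_at ?(A k lt_k) //; lia.
have code_j1 : code (j + i1) = 1 by rewrite S_at ?code1 //; lia.
have code_j2 : code (j + i2) = 3 by rewrite S_at ?code2 //; lia.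
move=> k lt_k; rewrite -[code (i1.+1 + k)]sigmaK -S_at; last by lia.
by rewrite -shift (agree_prefix_after13 code_j1 code_j2 A_j).
Qed.

Lemma agree_left_special n i1 i2 : 0 < n -> code i1 <> code i2 ->
  agree id i1.+1 i2.+1 n -> agree id i1.+1 0 n \/ agree sigma i1.+1 0 n.
Proof.
move=> n_gt0 neq A.
have A' : agree id i2.+1 i1.+1 n by move=> k lt_k; rewrite A.
have := code_adjacent i1; have := code_adjacent i2.
have -> : code i2.+1 = code i1.+1 by have := A 0 n_gt0; rewrite !addn0.
case E1: (code i1) neq => [|[|[|[|a]]]]; case E2: (code i2) => [|[|[|[|b]]]] // neq;
  case: (code i1.+1) => [|[|[|[|c]]]] //= _ _.
- by right; apply: agree_sigma_prefix_after02 E1 E2 A.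
- by left; apply: agree_prefix_after13 E1 E2 A.
- right=> k lt_k; rewrite A //; exact: agree_sigma_prefix_after02 E2 E1 A' k lt_k.
- left=> k lt_k; rewrite A //; exact: agree_prefix_after13 E2 E1 A' k lt_k.
Qed.

Definition ufactor (i n : nat) : seq nat := map code (iota i n).

Lemma size_ufactor i n : size (ufactor i n) = n.
Proof. by rewrite size_map size_iota. Qed.

Lemma ufactorS i n : ufactor i n.+1 = code i :: ufactor i.+1 n.
Proof. by []. Qed.

Lemma ufactorD i m n : ufactor i (m + n) = ufactor i m ++ ufactor (i + m) n.
Proof. by rewrite /ufactor iotaD map_cat. Qed.

Lemma nth_ufactor x i n k : k < n -> nth x (ufactor i n) k = code (i + k).
Proof. by move=> lt_k; rewrite (nth_map 0) ?size_iota // nth_iota. Qed.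

Lemma ufactorE i s : (forall k, k < size s -> code (i + k) = nth 0 s k) ->
  ufactor i (size s) = s.
Proof.
move=> E; apply: (@eq_from_nth _ 0) => [|k lt_k]; first exact: size_ufactor.
by rewrite nth_ufactor ?E // -(size_ufactor i (size s)).
Qed.

Lemma ufactor_agree g i j n : ufactor i n = map g (ufactor j n) <-> agree g i j n.
Proof.
split=> [E k lt_k | A].
  by rewrite -!(nth_ufactor 0 _ lt_k) E (nth_map 0) ?size_ufactor.
apply: (@eq_from_nth _ 0) => [|k]; first by rewrite size_map !size_ufactor.
by rewrite size_ufactor => lt_k; rewrite (nth_map 0) ?size_ufactor // !nth_ufactor // A.
Qed.

Definition left_special_code (s : seq nat) : Prop :=
  exists i1 i2, [/\ code i1 <> code i2,
                    ufactor i1.+1 (size s) = s & ufactor i2.+1 (size s) = s].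

Lemma left_special_code_prefix s : s != [::] -> left_special_code s ->
  s = ufactor 0 (size s) \/ s = map sigma (ufactor 0 (size s)).
Proof.
move=> s_ne [i1 [i2 [neq E1 E2]]].
have A : agree id i1.+1 i2.+1 (size s) by apply/ufactor_agree; rewrite map_id E1 E2.
have s_gt0 : 0 < size s by rewrite lt0n size_eq0.
case: (agree_left_special s_gt0 neq A) => /ufactor_agree; rewrite ?map_id E1.
- by left.
- by right.
Qed.

Definition swap23 (a : nat) : nat := match a with 2 => 3 | 3 => 2 | _ => a end.

Lemma swap23K : involutive swap23.
Proof. by case=> [|[|[|[|a]]]]. Qed.

Definition theta2_code (s : seq nat) : seq nat := rev (map swap23 s).

Lemma size_theta2_code s : size (theta2_code s) = size s.
Proof. by rewrite size_rev size_map. Qed.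

Lemma theta2_code_cat s t : theta2_code (s ++ t) = theta2_code t ++ theta2_code s.
Proof. by rewrite /theta2_code map_cat rev_cat. Qed.

Lemma theta2_code1 a : theta2_code [:: a] = [:: swap23 a].
Proof. by []. Qed.

Lemma theta2_code_rcons s a : theta2_code (rcons s a) = swap23 a :: theta2_code s.
Proof. by rewrite /theta2_code map_rcons rev_rcons. Qed.

Lemma theta2_block_window a b : a < 4 -> adjacent a b ->
  theta2_code (block a ++ window b) = block (swap23 a) ++ theta2_code (window a).
Proof. by case: a => [|[|[|[|a]]]] // _; case: b => [|[|[|[|b]]]]. Qed.

Lemma theta2_blocks_window a s b :
  a < 4 -> path adjacent a s -> adjacent (last a s) b ->
  theta2_code (blocks (a :: s) ++ window b) =
  blocks (theta2_code (a :: s)) ++ theta2_code (window a).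
Proof.
elim: s a => [|c s IHs] a lt_a4 /=.
  by rewrite theta2_code1 !blocks1 => _; exact: theta2_block_window.
case/andP=> adj_ac path_cs adj_b.
rewrite -catA theta2_code_cat IHs ?(adjacent_lt4 adj_ac) //.
rewrite -catA -theta2_code_cat theta2_block_window // -(cat1s a) theta2_code_cat.
by rewrite blocks_cat theta2_code1 blocks1 catA.
Qed.

Lemma path_ufactor i n : path adjacent (code i) (ufactor i.+1 n).
Proof. by elim: n i => [|n IHn] i //=; rewrite IHn andbT; exact: code_adjacent. Qed.

Lemma ufactor_block j : ufactor (bpos j) (size (block (code j))) = block (code j).
Proof. by apply: ufactorE => k; exact: code_block. Qed.

Lemma ufactor_window j : ufactor (bpos j) 5 = window (code j).
Proof.
have -> : 5 = size (window (code j)) by rewrite /window; case: ifP.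
apply: ufactorE => k lt_k; apply: code_window.
by move: lt_k; rewrite /window; case: ifP.
Qed.

Lemma blocks_ufactor0 p : blocks (ufactor 0 p) = ufactor 0 (bpos p).
Proof.
elim: p => [|p IHp]; first by [].
by rewrite -addn1 ufactorD blocks_cat IHp addn1 bposS ufactorD blocks1 ufactor_block.
Qed.

Definition theta2_pal_prefix (p : nat) : Prop :=
  [/\ 0 < p, code p.-1 = 0 & theta2_code (ufactor 0 p) = ufactor 0 p].

Lemma theta2_pal_prefix_next p : theta2_pal_prefix p -> theta2_pal_prefix (bpos p + 5).
Proof.
case=> p_gt0 last_p pal_p.
have s0_p : starts0 (code p) = false.
  by have := starts0_adjacent (code_adjacent p.-1); rewrite prednK // last_p.
split; [by rewrite addnS | by rewrite addnS /= code_window // /window s0_p |].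
have -> : ufactor 0 (bpos p + 5) = blocks (ufactor 0 p) ++ window (code p).
  by rewrite ufactorD blocks_ufactor0 add0n ufactor_window.
have E : ufactor 0 p = code 0 :: ufactor 1 p.-1 by rewrite -ufactorS (prednK p_gt0).
rewrite {1}E theta2_blocks_window ?code_lt4 ?path_ufactor //.
  by rewrite -E pal_p code0 /window s0_p.
rewrite (last_nth (code 0)) -E size_ufactor nth_ufactor ?ltn_predL //.
by have := code_adjacent p.-1; rewrite (prednK p_gt0).
Qed.

Lemma theta2_pal_prefix_large k : exists2 p, k <= p & theta2_pal_prefix p.
Proof.
elim: k => [|k [p le_kp pal_p]].
  exists 1 => //; split=> //; first exact: code0.
  by rewrite -[ufactor 0 1]/[:: code 0] code0.
exists (bpos p + 5); last exact: theta2_pal_prefix_next.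
by have := bpos_ge p; lia.
Qed.

Lemma ufactor_theta2 i n : exists i', ufactor i' n = theta2_code (ufactor i n).
Proof.
have [p le_p [_ _ pal_p]] := theta2_pal_prefix_large (i + n).
exists (p - (i + n)); apply/eqP.
have E1 : ufactor 0 p = ufactor 0 i ++ ufactor i n ++ ufactor (i + n) (p - (i + n)).
  by rewrite -{1}(subnKC le_p) !ufactorD add0n catA.
have E2 : ufactor 0 p =
    ufactor 0 (p - (i + n)) ++ ufactor (p - (i + n)) n ++ ufactor (p - i) i.
  have Ep : p - (i + n) + n + i = p by lia.
  by rewrite -{1}Ep !ufactorD add0n -catA; congr (_ ++ (_ ++ ufactor _ _)); lia.
move: pal_p; rewrite {1}E1 E2 !theta2_code_cat -catA => /eqP.
rewrite eqseq_cat ?size_theta2_code ?size_ufactor // => /andP [_].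
by rewrite eqseq_cat ?size_theta2_code ?size_ufactor // eq_sym => /andP [].
Qed.

Lemma left_special_code_theta2 s : s != [::] ->
  left_special_code s -> left_special_code (theta2_code s) ->
  theta2_code s = s \/ map sigma (theta2_code s) = s.
Proof.
move=> s_ne /(left_special_code_prefix s_ne) s_pre.
have t_ne : theta2_code s != [::] by rewrite -size_eq0 size_theta2_code size_eq0.
move=> /(left_special_code_prefix t_ne); rewrite size_theta2_code.
move: (ufactor 0 (size s)) s_pre => P [] -> [] ->; rewrite ?(mapK sigmaK).
- by left.
- by right.
- by right.
- by left.
Qed.

Lemma factor_ufactor w : factor w -> exists i, ufactor i (size w) = map val w.
Proof.
case=> i E; exists i; rewrite {2}E -map_comp /ufactor.
by rewrite -[i in iota i](addn0 i) iotaDl -map_comp.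
Qed.

Lemma left_special_codes w : left_special w -> left_special_code (map val w).
Proof.
case=> a [b [neq_ab [/factor_ufactor [i Ei] /factor_ufactor [j Ej]]]].
move: Ei Ej; rewrite /= !ufactorS => -[code_i Ei] [code_j Ej].
exists i, j; rewrite size_map; split=> //.
by rewrite code_i code_j => /val_inj.
Qed.

Lemma right_special_codes w :
  right_special w -> left_special_code (theta2_code (map val w)).
Proof.
case=> a [b [neq_ab [/factor_ufactor [i Ei] /factor_ufactor [j Ej]]]].
have [i' Ei'] := ufactor_theta2 i (size (rcons w a)).
have [j' Ej'] := ufactor_theta2 j (size (rcons w b)).
rewrite Ei size_rcons map_rcons theta2_code_rcons ufactorS in Ei'.
rewrite Ej size_rcons map_rcons theta2_code_rcons ufactorS in Ej'.
case: Ei' Ej' => [code_i' Ei'] [code_j' Ej'].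
exists i', j'; rewrite size_theta2_code size_map; split=> //.
by rewrite code_i' code_j' => /(inv_inj swap23K) /val_inj.
Qed.

Lemma map_val_theta2 w : map val (theta2 w) = theta2_code (map val w).
Proof.
rewrite /theta2 /antimorph /theta2_code map_rev -!map_comp; congr rev.
by apply: eq_map => -[[|[|[|[|a]]]] lt_a4] /=; rewrite ?val_L.
Qed.

Lemma map_val_theta1 w : map val (theta1 w) = map sigma (theta2_code (map val w)).
Proof.
rewrite /theta1 /antimorph /theta2_code !map_rev -!map_comp; congr rev.
by apply: eq_map => -[[|[|[|[|a]]]] lt_a4] /=; rewrite ?val_L.
Qed.

Theorem corollary22 (w : seq letter) :
  w <> [::] -> bispecial w -> theta1 w = w \/ theta2 w = w.
Proof.
move=> w_ne [_ [/left_special_codes ls /right_special_codes rs]].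
have s_ne : map val w != [::] by case: w w_ne {ls rs}.
case: (left_special_code_theta2 s_ne ls rs) => [fix2 | fix1]; [right | left];
  by apply: (inj_map val_inj); rewrite ?map_val_theta1 ?map_val_theta2.
Qed.
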